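(* For every $\varphi\in\mathbb{R}$, let $|\varphi\rangle = P(\varphi)|+\rangle = (|0\rangle + e^{i\varphi}|1\rangle)/\sqrt{2}$. Then $$C\bigl(|\varphi\rangle\langle\varphi|\bigr) = \frac{|\sin\varphi| + |\cos\varphi| - 1}{2}.$$
   Context: Single-qubit phase-point operators: for $q,p\in\{0,1\}$, $A_{(q,p)} = \tfrac12\bigl(I + (-1)^p X + (-1)^{q+p} Y + (-1)^q Z\bigr)$, where $X,Y,Z$ are the Pauli matrices. The Wigner function of a single-qubit density matrix $\rho$ is the vector $W_\rho\in\mathbb{R}^4$ with entries $W_\rho(q,p) = \tfrac12\operatorname{tr}(\rho A_{(q,p)})$. The single-qubit stabilizer states are the six pure states $|0\rangle,|1\rangle,|\pm\rangle=(|0\rangle\pm|1\rangle)/\sqrt2,|\pm i\rangle=(|0\rangle\pm i|1\rangle)/\sqrt2$. The stabilizer polytope $\mathcal{W}_{\mathrm{free}}\subset\mathbb{R}^4$ is the convex hull of the Wigner vectors of the stabilizer states. The Wigner distance of $\rho$ is $C(\rho) = \min_{f\in\mathcal{W}_{\mathrm{free}}} \|W_\rho - f\|_1$, with $\|\cdot\|_1$ the $\ell^1$ norm on $\mathbb{R}^4$. The phase gate is $P(\varphi) = \mathrm{diag}(1, e^{i\varphi})$. *)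

From HB Require Import structures.
From mathcomp Require Import all_boot all_order all_algebra.
From mathcomp Require Import complex.
From mathcomp Require Import classical_sets reals trigo.
Set Implicit Arguments. Unset Strict Implicit. Unset Printing Implicit Defensive.
Import Order.TTheory GRing.Theory Num.Theory ComplexField.
Local Open Scope ring_scope.
Local Open Scope complex_scope.

Section Qubit.
Variable R : realType.
Local Notation C := R[i].

Definition mx22 (a b c d : C) : 'M[C]_2 :=
  \matrix_(i < 2, j < 2)
    if (i : nat) == 0%N then (if (j : nat) == 0%N then a else b)
    else (if (j : nat) == 0%N then c else d).

Definition PauliI : 'M[C]_2 := mx22 1 0 0 1.
Definition PauliX : 'M[C]_2 := mx22 0 1 1 0.
Definition PauliY : 'M[C]_2 := mx22 0 (- 'i) 'i 0.
Definition PauliZ : 'M[C]_2 := mx22 1 0 0 (-1).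

Definition phase_point (q p : 'I_2) : 'M[C]_2 :=
  (1 / 2%:R) *: (PauliI + ((-1) ^+ p) *: PauliX
                 + ((-1) ^+ ((q : nat) + (p : nat))%N) *: PauliY + ((-1) ^+ q) *: PauliZ).

Definition ket (a b : C) : 'cV[C]_2 := \col_(i < 2) if (i : nat) == 0%N then a else b.
Definition adjoint m n (A : 'M[C]_(m, n)) : 'M[C]_(n, m) := (map_mx conjc A)^T.
Definition proj (v : 'cV[C]_2) : 'M[C]_2 := v *m adjoint v.

(* Wigner function: W_rho(q,p) = 1/2 tr(rho A_(q,p)), as a real vector
   (real part; the trace is real for Hermitian rho). *)
Definition wigner (rho : 'M[C]_2) : 'I_2 * 'I_2 -> R :=
  fun x => complex.Re ((1 / 2%:R) * \tr (rho *m phase_point x.1 x.2)).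

Definition invsqrt2 : C := (Num.sqrt (2%:R : R))^-1 %:C.

Definition stab_ket (k : 'I_6) : 'cV[C]_2 :=
  match (k : nat) with
  | 0%N => ket 1 0
  | 1%N => ket 0 1
  | 2%N => ket invsqrt2 invsqrt2
  | 3%N => ket invsqrt2 (- invsqrt2)
  | 4%N => ket invsqrt2 ('i * invsqrt2)
  | _ => ket invsqrt2 (- ('i * invsqrt2))
  end.

Definition W_free : set ('I_2 * 'I_2 -> R) :=
  [set f | exists lam : 'I_6 -> R,
     (forall k, 0 <= lam k) /\ \sum_k lam k = 1 /\
     forall x, f x = \sum_k lam k * wigner (proj (stab_ket k)) x].

Definition l1norm (g : 'I_2 * 'I_2 -> R) : R := \sum_x `|g x|.

(* Wigner distance: C(rho) = min_{f in W_free} || W_rho - f ||_1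
   (the minimum exists by compactness; we take it as an infimum) *)
Definition wigner_distance (rho : 'M[C]_2) : R :=
  inf [set r | exists2 f, W_free f & r = l1norm (fun x => wigner rho x - f x)].

Definition expi (phi : R) : C := cos phi +i* sin phi.
Definition phase_gate (phi : R) : 'M[C]_2 := mx22 1 0 0 (expi phi).
Definition ket_plus : 'cV[C]_2 := ket invsqrt2 invsqrt2.

End Qubit.

From HB Require Import structures.
From mathcomp Require Import all_boot all_order all_algebra.
From mathcomp Require Import complex ring lra.
From mathcomp Require Import classical_sets reals trigo.
Set Implicit Arguments. Unset Strict Implicit. Unset Printing Implicit Defensive.
Import Order.TTheory GRing.Theory Num.Theory ComplexField.
Local Open Scope ring_scope.

(* A qubit state with Bloch vector (x, y, z) has Wigner function
   (1 + x (-1)^p + y (-1)^(q+p) + z (-1)^q) / 4.  The stabilizer polytope is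
   therefore the image of the octahedron |x| + |y| + |z| <= 1, and |phi> has
   Bloch vector (c, s, 0) = (cos phi, sin phi, 0).  The l1 distance between the
   Wigner functions of (x, y, z) and (x', y', z') is a quarter of the sum of
   |a +- b +- c| over four sign patterns (a, b, c being the coordinate
   differences), which is at least (|a| + |b|) / 2, with equality when c = 0 and
   |a| = |b|.  Hence the distance from (c, s, 0) to a point (u, v, w) of the
   octahedron is at least (|c - u| + |s - v|) / 2 >= (|c| + |s| - 1) / 2, and
   moving both coordinates of (c, s) towards 0 by t = (|c| + |s| - 1) / 2 lands
   on the boundary of the octahedron at exactly that distance. *)

Lemma sum_ord2 (V : nmodType) (F : 'I_2 -> V) : \sum_i F i = F ord0 + F ord_max.
Proof. by rewrite big_ord_recl big_ord1; congr (_ + F _); apply: val_inj. Qed.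

Lemma sum_pair_ord2 (V : nmodType) (F : 'I_2 * 'I_2 -> V) :
  \sum_qp F qp =
  F (ord0, ord0) + F (ord0, ord_max) + F (ord_max, ord0) + F (ord_max, ord_max).
Proof.
have -> : \sum_qp F qp = \sum_qp F (qp.1, qp.2) by apply: eq_bigr => -[].
by rewrite -(pair_bigA _ (fun i j => F (i, j))) !sum_ord2 addrA.
Qed.

Section NormInequalities.
Variable R : realFieldType.
Implicit Types a b c s t : R.

Lemma lerD_norm_normDB a b : `|a| + `|b| <= `|a + b| + `|a - b|.
Proof.
have := ler_norm (a + b); have := ler_norm (- (a + b)); have := ler_norm (a - b);
  have := ler_norm (- (a - b)); rewrite !normrN.
by case: (ger0P a); case: (ger0P b) => *; lra.
Qed.

Lemma normD_normB_eq a b : `|a| = `|b| -> `|a + b| + `|a - b| = `|a| + `|b|.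
Proof.
move/eqP; rewrite eqr_norm2 => /orP[]/eqP->.
  by rewrite subrr normr0 addr0 -mulr2n normrMn.
by rewrite addNr normr0 add0r -opprD !normrN -mulr2n normrMn.
Qed.

Lemma norm_shrink c t : 0 <= t <= `|c| -> exists u, `|u| = `|c| - t /\ `|c - u| = t.
Proof.
case: (ger0P c) => c0 /andP[t0 tc].
  exists (c - t); have -> : c - (c - t) = t by ring.
  by rewrite !ger0_norm ?subr_ge0.
exists (c + t); have -> : c - (c + t) = - t by ring.
by rewrite normrN ler0_norm ?ger0_norm //; lra.
Qed.

Lemma norm_add_ge1 c s : `|c| <= 1 -> `|s| <= 1 -> c ^+ 2 + s ^+ 2 = 1 -> 1 <= `|c| + `|s|.
Proof.
rewrite -(real_normK (num_real c)) -(real_normK (num_real s)).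
by have := normr_ge0 c; have := normr_ge0 s; nra.
Qed.

Lemma norm_convex_le (I : finType) (lam x : I -> R) :
  (forall k, 0 <= lam k) -> `|\sum_k lam k * x k| <= \sum_k lam k * `|x k|.
Proof.
move=> lam_ge0; apply: le_trans (ler_norm_sum _ _ _) _.
by apply: ler_sum => k _; rewrite normrM ger0_norm.
Qed.

End NormInequalities.

Lemma inf_attained (R : realType) (S : set R) (m : R) : S m -> lbound S m -> inf S = m.
Proof.
move=> Sm mS; apply/le_anti/andP; split; last by apply: lb_le_inf => //; exists m.
by apply: ge_inf Sm; exists m.
Qed.

Section QubitWigner.
Variable R : realType.
Local Open Scope complex_scope.

(* The Wigner function of the density matrix (I + x X + y Y + z Z) / 2. *)
Definition bloch_wigner (x y z : R) (qp : 'I_2 * 'I_2) : R :=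
  (1 + x * (-1) ^+ qp.2 + y * (-1) ^+ (qp.1 + qp.2)%N + z * (-1) ^+ qp.1) / 4%:R.

Lemma sum_bloch_wigner (I : finType) (lam x y z : I -> R) :
  \sum_k lam k = 1 ->
  (fun qp => \sum_k lam k * bloch_wigner (x k) (y k) (z k) qp) =1
  bloch_wigner (\sum_k lam k * x k) (\sum_k lam k * y k) (\sum_k lam k * z k).
Proof.
move=> lam1 qp; rewrite /bloch_wigner.
under eq_bigr => k _ do rewrite mulrA !mulrDr !mulrA mulr1.
by rewrite -mulr_suml !big_split /= -!mulr_suml lam1.
Qed.

Lemma wigner_proj_ket (a1 a2 b1 b2 : R) :
  a1 ^+ 2 + a2 ^+ 2 + b1 ^+ 2 + b2 ^+ 2 = 1 ->
  wigner (proj (ket (a1 +i* a2) (b1 +i* b2))) =1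
  bloch_wigner (2%:R * (a1 * b1 + a2 * b2)) (2%:R * (a1 * b2 - a2 * b1))
               (a1 ^+ 2 + a2 ^+ 2 - b1 ^+ 2 - b2 ^+ 2).
Proof.
move=> norm1 [q p].
rewrite /wigner /bloch_wigner /= /mxtrace !sum_ord2 !mxE !sum_ord2 !mxE !big_ord1 !mxE /=.
have -> : (1 / 2%:R : R[i]) = (1 / 2%:R : R)%:C by rewrite fmorph_div rmorph1 rmorph_nat.
have signC n : (-1 : R[i]) ^+ n = ((-1) ^+ n)%:C by rewrite rmorphXn rmorphN1.
rewrite !signC; simpc.
(* The constant term 1 of [bloch_wigner] is the trace of the projector. *)
by rewrite -[X in X + 2%:R * _ * _ + _ + _]norm1 /=; field.
Qed.

Lemma wigner_phase_plus (phi : R) :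
  wigner (proj (phase_gate phi *m ket_plus R)) =1 bloch_wigner (cos phi) (sin phi) 0.
Proof.
set r := (Num.sqrt (2%:R : R))^-1.
have r2 : r ^+ 2 = 2%:R^-1 by rewrite exprVn sqr_sqrtr.
have cs2 := cos2Dsin2 phi.
have -> : phase_gate phi *m ket_plus R = ket (r +i* 0) ((r * cos phi) +i* (r * sin phi)).
  apply/matrixP => i j; rewrite !mxE !sum_ord2 !mxE /=.
  case: i => [[|[|//]] ?] /=; first by rewrite mul1r mul0r addr0.
  by rewrite mul0r add0r /expi /invsqrt2; simpc; rewrite mulrC [sin _ * _]mulrC.
move=> qp; rewrite wigner_proj_ket; last by rewrite !exprMn r2 expr0n /=; lra.
by congr bloch_wigner; rewrite ?mulrA -?expr2 ?exprMn r2 ?expr0n /=; lra.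
Qed.

Definition stab_x (k : 'I_6) : R := [:: 0; 0; 1; -1; 0; 0]`_k.
Definition stab_y (k : 'I_6) : R := [:: 0; 0; 0; 0; 1; -1]`_k.
Definition stab_z (k : 'I_6) : R := [:: 1; -1; 0; 0; 0; 0]`_k.

Lemma wigner_stab_ket (k : 'I_6) :
  wigner (proj (stab_ket R k)) =1 bloch_wigner (stab_x k) (stab_y k) (stab_z k).
Proof.
have r2 : (Num.sqrt 2%:R)^-1 ^+ 2 = 2%:R^-1 :> R by rewrite exprVn sqr_sqrtr.
move=> qp; case: k => [[|[|[|[|[|[|//]]]]]] ?];
  rewrite /stab_ket /invsqrt2 /= -[ket _ _]/(ket (_ +i* _) (_ +i* _)) wigner_proj_ket;
  try congr bloch_wigner; rewrite /stab_x /stab_y /stab_z /=;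
  move: r2; set r := (Num.sqrt _)^-1; lra.
Qed.

Lemma stab_bloch_l1 (k : 'I_6) : `|stab_x k| + `|stab_y k| + `|stab_z k| = 1.
Proof.
by case: k => [[|[|[|[|[|[|//]]]]]] ?];
  rewrite /stab_x /stab_y /stab_z /= ?normrN normr1 normr0 ?addr0 ?add0r.
Qed.

Lemma W_freeP (f : 'I_2 * 'I_2 -> R) :
  W_free f <-> exists u v w : R, `|u| + `|v| + `|w| <= 1 /\ f =1 bloch_wigner u v w.
Proof.
split.
  move=> [lam [lam_ge0 [lam1 fE]]].
  exists (\sum_k lam k * stab_x k), (\sum_k lam k * stab_y k), (\sum_k lam k * stab_z k).
  split; last first.
    move=> qp; rewrite fE -sum_bloch_wigner //.
    by apply: eq_bigr => k _; rewrite wigner_stab_ket.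
  rewrite -lam1; under [X in _ <= X]eq_bigr => k _ do
    rewrite -[lam k]mulr1 -(stab_bloch_l1 k) !mulrDr.
  by rewrite !big_split /= !lerD ?norm_convex_le.
move=> [u [v [w [uvw fE]]]].
(* Split each coordinate into its positive and negative parts and spread the
   slack 1 - |u| - |v| - |w| evenly over the six stabilizer states. *)
pose s := (1 - (`|u| + `|v| + `|w|)) / 6%:R.
pose lam (k : 'I_6) := [:: (`|w| + w) / 2%:R + s; (`|w| - w) / 2%:R + s;
  (`|u| + u) / 2%:R + s; (`|u| - u) / 2%:R + s;
  (`|v| + v) / 2%:R + s; (`|v| - v) / 2%:R + s]`_k.
have lam1 : \sum_k lam k = 1 by rewrite !big_ord_recl big_ord0 /lam /s /=; lra.
exists lam; split; [|split=> // qp].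
  have s_ge0 : 0 <= s by rewrite /s; lra.
  have norm_pm (e : R) : 0 <= `|e| + e /\ 0 <= `|e| - e.
    by have := ler_norm e; have := ler_norm (- e); rewrite normrN; split; lra.
  have [[? ?] [[? ?] [? ?]]] := (norm_pm u, (norm_pm v, norm_pm w)).
  by case=> [[|[|[|[|[|[|//]]]]]] ?]; rewrite /lam /=; lra.
under eq_bigr => k _ do rewrite wigner_stab_ket.
rewrite sum_bloch_wigner // fE; congr bloch_wigner;
  rewrite !big_ord_recl big_ord0 /lam /stab_x /stab_y /stab_z /=; lra.
Qed.

Lemma eq_l1norm (g h : 'I_2 * 'I_2 -> R) : g =1 h -> l1norm g = l1norm h.
Proof. by move=> gh; apply: eq_bigr => qp _; rewrite gh. Qed.

Lemma l1norm_sub_bloch_wigner (x y z x' y' z' : R) :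
  let a := x - x' in let b := y - y' in let c := z - z' in
  4%:R * l1norm (fun qp => bloch_wigner x y z qp - bloch_wigner x' y' z' qp) =
  `|a + b + c| + `|c - a - b| + `|a - b - c| + `|b - a - c|.
Proof.
rewrite /l1norm sum_pair_ord2 !mulrDr /bloch_wigner /= expr0 expr1 sqrrN expr1n.
rewrite -[4%:R]normr_nat -!normrM normr_nat.
by congr (_ + _ + _ + _); apply: congr1; lra.
Qed.

Lemma l1norm_sub_bloch_wigner_ge (x y z x' y' z' : R) :
  `|x - x'| + `|y - y'| <=
  2%:R * l1norm (fun qp => bloch_wigner x y z qp - bloch_wigner x' y' z' qp).
Proof.
have /= := l1norm_sub_bloch_wigner x y z x' y' z'.
set a := x - x'; set b := y - y'; set c := z - z' => l1E.
have normDx2 : `|2%:R * (a + b)| <= `|a + b + c| + `|c - a - b|.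
  by rewrite (_ : 2%:R * (a + b) = a + b + c - (c - a - b)) ?ler_normB //; ring.
have normBx2 : `|2%:R * (a - b)| <= `|a - b - c| + `|b - a - c|.
  by rewrite (_ : 2%:R * (a - b) = a - b - c - (b - a - c)) ?ler_normB //; ring.
rewrite !normrM normr_nat in normDx2 normBx2.
have := lerD_norm_normDB a b; lra.
Qed.

Lemma l1norm_sub_bloch_wigner_eq (x y z x' y' : R) : `|x - x'| = `|y - y'| ->
  l1norm (fun qp => bloch_wigner x y z qp - bloch_wigner x' y' z qp) = `|x - x'|.
Proof.
have /= := l1norm_sub_bloch_wigner x y z x' y' z.
rewrite subrr addr0 sub0r !subr0 -opprD normrN [`|y - y' - _|]distrC.
set a := x - x'; set b := y - y' => l1E ab; have := normD_normB_eq ab; lra.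
Qed.

Lemma l1norm_to_W_free_ge (c s z : R) (f : 'I_2 * 'I_2 -> R) : W_free f ->
  (`|c| + `|s| - 1) / 2%:R <= l1norm (fun qp => bloch_wigner c s z qp - f qp).
Proof.
move=> /W_freeP[u [v [w [uvw fE]]]].
rewrite (@eq_l1norm _ (fun qp => bloch_wigner c s z qp - bloch_wigner u v w qp)) => [|qp];
  last by rewrite fE.
have := l1norm_sub_bloch_wigner_ge c s z u v w.
have := lerB_normD c (- u); have := lerB_normD s (- v); rewrite !normrN.
have := normr_ge0 w; lra.
Qed.

Lemma exists_W_free_at_l1norm (c s : R) :
  `|c| <= 1 -> `|s| <= 1 -> 1 <= `|c| + `|s| ->
  exists2 f, W_free f &
    l1norm (fun qp => bloch_wigner c s 0 qp - f qp) = (`|c| + `|s| - 1) / 2%:R.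
Proof.
move=> c1 s1 cs1; set t := (_ / _).
have [u [normu cu]] : exists u, `|u| = `|c| - t /\ `|c - u| = t.
  by apply: norm_shrink; rewrite /t; apply/andP; split; lra.
have [v [normv sv]] : exists v, `|v| = `|s| - t /\ `|s - v| = t.
  by apply: norm_shrink; rewrite /t; apply/andP; split; lra.
exists (bloch_wigner u v 0).
  by apply/W_freeP; exists u, v, 0; rewrite normr0 normu normv /t; split=> //; lra.
by rewrite l1norm_sub_bloch_wigner_eq cu // sv.
Qed.

End QubitWigner.

Theorem lemma1 (R : realType) (phi : R) :
  wigner_distance (proj (phase_gate phi *m ket_plus R)) =
  (`|sin phi| + `|cos phi| - 1) / 2%:R.
Proof.
have rhoE f : l1norm (fun qp => wigner (proj (phase_gate phi *m ket_plus R)) qp - f qp) =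
    l1norm (fun qp => bloch_wigner (cos phi) (sin phi) 0 qp - f qp).
  by apply: eq_l1norm => qp; rewrite wigner_phase_plus.
rewrite [`|sin _| + _]addrC; apply: inf_attained.
  have cs1 := norm_add_ge1 (cos_max phi) (sin_max phi) (cos2Dsin2 phi).
  have [f Wf df] := exists_W_free_at_l1norm (cos_max phi) (sin_max phi) cs1.
  by exists f => //; rewrite rhoE df.
by move=> _ [f Wf ->]; rewrite rhoE; apply: l1norm_to_W_free_ge.
Qed.
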